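(* Let $S\subseteq[n]$. Suppose each strategic agent $k\in S$ chooses a random vector $\delta_k\in\mathbb{R}^n$ with finite first and second moments, independently across agents ($\delta_i=0$ for $i\notin S$), and that this profile is a (mixed) Nash equilibrium: for every $k\in S$, almost surely $\delta_k$ maximizes $x\mapsto\mathbb{E}[g_k(W'_x,P'_x)]$ over $x\in\mathbb{R}^n$, where $(W'_x,P'_x)$ is the stable point for positions $M+\Delta_x$ with $\Delta_xe_k=x$, $\Delta_xe_j=\delta_j$ ($j\neq k$), and the expectation is over $\{\delta_j:j\in S\setminus\{k\}\}$. Then each $\delta_k$ is almost surely equal to a deterministic vector; i.e., every Nash equilibrium is a pure-strategy Nash equilibrium.
   Context: Fix agents $[n]=\{1,\dots,n\}$. Let $\Sigma\in\mathbb{R}^{n\times n}$ be symmetric positive definite, $\Gamma=\mathrm{diag}(\gamma_1,\dots,\gamma_n)$ with all $\gamma_i>0$, and let $M\in\mathbb{R}^{n\times n}$ be the matrix of true beliefs with $i$-th column $\mu_i=Me_i$. For a matrix of reported negotiating positions $M'\in\mathbb{R}^{n\times n}$, the stable point for $M'$ is the unique pair $(W,P)$ of real $n\times n$ matrices with $W=W^T$, $P^T=-P$ and $M'-P=2\Sigma W\Gamma$; equivalently $\mathrm{vec}(W)=\tfrac12(\Gamma\otimes\Sigma+\Sigma\otimes\Gamma)^{-1}\mathrm{vec}(M'+M'^T)$ and $P=M'-2\Sigma W\Gamma$. Here $\mathrm{vec}$ stacks columns and $e_i$ is the $i$-th standard basis vector. Agent $i$'s (true) utility at $(W,P)$ is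 $g_i(W,P)=w_i^T(\mu_i-Pe_i)-\gamma_i\, w_i^T\Sigma w_i$, where $w_i=We_i$. *)

From HB Require Import structures.
From mathcomp Require Import all_boot all_order all_algebra.
From mathcomp Require Import all_classical all_reals all_analysis.
Set Implicit Arguments. Unset Strict Implicit. Unset Printing Implicit Defensive.
Import Order.TTheory GRing.Theory Num.Theory.
Local Open Scope ring_scope.
Local Open Scope classical_set_scope.

Section Defs.
Variables (R : realType) (n : nat).

Definition sym_posdef (Sigma : 'M[R]_n) : Prop :=
  Sigma^T = Sigma /\
  forall v : 'cV[R]_n, v != 0 -> 0 < (v^T *m Sigma *m v) 0 0.

Definition is_stable_point (Sigma : 'M[R]_n) (gamma : 'rV[R]_n)
  (M' : 'M[R]_n) (WP : 'M[R]_n * 'M[R]_n) : Prop :=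
  WP.1^T = WP.1 /\ WP.2^T = - WP.2 /\
  M' - WP.2 = 2%:R *: (Sigma *m WP.1 *m diag_mx gamma).

(* "the" stable point (unique when Sigma is SPD and gamma > 0) *)
Definition stable_point (Sigma : 'M[R]_n) (gamma : 'rV[R]_n) (M' : 'M[R]_n)
  : 'M[R]_n * 'M[R]_n :=
  xget (0, 0) (is_stable_point Sigma gamma M').

Definition utility (Sigma : 'M[R]_n) (gamma : 'rV[R]_n) (M : 'M[R]_n)
  (i : 'I_n) (WP : 'M[R]_n * 'M[R]_n) : R :=
  ((col i WP.1)^T *m (col i M - col i WP.2)) 0 0
  - gamma 0 i * ((col i WP.1)^T *m Sigma *m col i WP.1) 0 0.

Definition deviate (M : 'M[R]_n) (d : 'I_n -> 'cV[R]_n) (k : 'I_n)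
  (x : 'cV[R]_n) : 'M[R]_n :=
  M + \matrix_(a < n, b < n) (if b == k then x a 0 else d b a 0).

End Defs.

Section Prob.
Local Open Scope ereal_scope.
Context {d : measure_display} {Omega : measurableType d} {R : realType} {n : nat}.

(* mutual independence of the random vectors (delta_k)_{k in S}: the joint
   law factorizes on all measurable coordinate rectangles (a pi-system
   generating each sigma(delta_k)); taking A k i = setT for agents outside a
   subfamily gives the product rule for every subfamily. *)
Definition indep_vectors (P : probability Omega R) (S : {set 'I_n})
  (delta : 'I_n -> Omega -> 'cV[R]_n) : Prop :=
  forall A : 'I_n -> 'I_n -> set R, (forall k i, measurable (A k i)) ->
    P [set w | forall k, k \in S -> forall i, A k i (delta k w i 0%R)]
    = \prod_(k in S) P [set w | forall i, A k i (delta k w i 0%R)].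

Definition exp_utility (P : probability Omega R) (Sigma : 'M[R]_n)
  (gamma : 'rV[R]_n) (M : 'M[R]_n) (delta : 'I_n -> Omega -> 'cV[R]_n)
  (k : 'I_n) (x : 'cV[R]_n) : \bar R :=
  \int[P]_w (utility Sigma gamma M k
               (stable_point Sigma gamma (deviate M (delta^~ w) k x)))%:E.

End Prob.

(* For fixed positions of the other agents, the stable point depends linearly
   on the reported positions, and agent k's utility is an affine function of
   the stable point minus a quadratic form in it.  Hence, as a function of k's
   own report x, the utility u satisfies
     u ((x + y) / 2) = (u x + u y) / 2 + c / 4,
   where c is the quadratic form evaluated at the stable point of the matrix
   whose only nonzero column is x - y, in position k.  This c does not depend on
   the others' positions, and it is positive for x <> y: the trace of W times
   the stable-point equation shows w_k' (x - y) = 2 tr (W' Sigma W Gamma), which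
   dominates gamma_k w_k' Sigma w_k.  Taking expectations (second moments make
   everything integrable), the expected utility is strictly midpoint concave, so
   it has at most one maximizer; since almost every value of delta_k is a
   maximizer, delta_k is almost surely constant. *)

From HB Require Import structures.
From mathcomp Require Import all_boot all_order all_algebra.
From mathcomp Require Import all_classical all_reals all_analysis.
From mathcomp.algebra_tactics Require Import ring lra.
Set Implicit Arguments. Unset Strict Implicit. Unset Printing Implicit Defensive.
Import Order.TTheory GRing.Theory Num.Theory.
Local Open Scope ring_scope.

Lemma mxtrace_sym_skew (R : numFieldType) n (W P : 'M[R]_n) :
  W^T = W -> P^T = - P -> \tr (W *m P) = 0.
Proof.
move=> W_sym P_skew.
have trN : \tr (W *m P) = - \tr (W *m P).
  by rewrite -[LHS]mxtrace_tr trmx_mul W_sym P_skew mulNmx raddfN mxtrace_mulC.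
by apply/eqP; rewrite -eqNr -trN.
Qed.

Lemma linear_mx_sum_delta (R : comNzRingType) m n p q
    (f : 'M[R]_(m, n) -> 'M[R]_(p, q)) : linear f ->
  forall A, f A = \sum_a \sum_b A a b *: f (delta_mx a b).
Proof.
move=> f_lin A; pose F : {linear 'M[R]_(m, n) -> 'M[R]_(p, q)} :=
  HB.pack f (GRing.isLinear.Build _ _ _ _ f f_lin).
rewrite -[f]/(F : _ -> _) {1}[A]matrix_sum_delta linear_sum.
by apply: eq_bigr => a _; rewrite linear_sum; apply: eq_bigr => b _; rewrite linearZ.
Qed.

Lemma col_mul_delta (R : pzRingType) n (v : 'cV[R]_n) (k : 'I_n) :
  col k (v *m delta_mx 0 k) = v.
Proof. by apply/colP => i; rewrite !mxE big_ord1 !mxE !eqxx mulr1. Qed.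

Lemma col_mul_diag (R : comPzRingType) m n (A : 'M[R]_(m, n)) d k :
  col k (A *m diag_mx d) = d 0 k *: col k A.
Proof. by apply/colP => i; rewrite mul_mx_diag !mxE mulrC. Qed.

Lemma col_mul (R : pzRingType) m n p (A : 'M[R]_(m, n)) (B : 'M[R]_(n, p)) k :
  col k (A *m B) = A *m col k B.
Proof. by rewrite !colE mulmxA. Qed.

Lemma mxtrace_sym_mul_delta (R : comNzRingType) n (W : 'M[R]_n) (v : 'cV[R]_n) k :
  W^T = W -> \tr (W *m (v *m delta_mx 0 k)) = ((col k W)^T *m v) 0 0.
Proof.
move=> W_sym; rewrite mulmxA mxtrace_mulC mulmxA -rowE trace_mx11.
by rewrite tr_col W_sym.
Qed.

Lemma skew_mul_delta_eq0 (R : numFieldType) n (v : 'cV[R]_n) k :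
  (v *m delta_mx 0 k)^T = - (v *m delta_mx 0 k) -> v = 0.
Proof.
have -> : v *m delta_mx 0 k = \matrix_(b, c) (if c == k then v b 0 else 0).
  apply/matrixP => b c; rewrite !mxE big_ord1 mxE.
  by case: (c == k); rewrite ?mulr1 ?mulr0.
move=> /matrixP skew; apply/colP => a; have := skew a k; rewrite !mxE eqxx.
case: (eqVneq a k) => [->|_] vE; apply/eqP; last by rewrite -oppr_eq0 -vE.
by rewrite -eqNr -vE.
Qed.

Lemma quadratic_midpoint (F : numFieldType) (V : lmodType F) (l : V -> F)
    (B : V -> V -> F) :
  linear_for *%R l -> (forall z, linear_for *%R (B^~ z)) ->
  (forall z, linear_for *%R (B z)) ->
  forall x y, l (2^-1 *: (x + y)) - B (2^-1 *: (x + y)) (2^-1 *: (x + y)) =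
    2^-1 * (l x - B x x + (l y - B y y)) + 4^-1 * B (x - y) (x - y).
Proof.
have linZD (g : V -> F) a b u v :
    linear_for *%R g -> g (a *: u + b *: v) = a * g u + b * g v.
  move=> g_lin; have g0 : g 0 = 0.
    have /esym/eqP := g_lin 1 0 0.
    by rewrite scale1r addr0 mul1r -subr_eq0 addrK => /eqP.
  by rewrite g_lin -[b *: v]addr0 g_lin g0 addr0.
move=> l_lin Bl Br x y.
have BZDl a b u v w : B (a *: u + b *: v) w = a * B u w + b * B v w.
  exact: linZD (Bl w).
have BZDr a b u v w : B w (a *: u + b *: v) = a * B w u + b * B w v.
  exact: linZD (Br w).
rewrite scalerDr -[x - y](congr2 +%R (scale1r x) (scaleN1r y)).
rewrite (linZD l) // !BZDl !BZDr.
by field.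
Qed.

Lemma midpoint_concave_argmax_unique (R : realFieldType) (V : lmodType R)
    (F : V -> R) :
  (forall x y, x != y -> 2^-1 * (F x + F y) < F (2^-1 *: (x + y))) ->
  forall x y, (forall z, F z <= F x) -> (forall z, F z <= F y) -> x = y.
Proof.
move=> F_concave x y x_max y_max; apply/eqP/contraT => /F_concave.
by have := x_max (2^-1 *: (x + y)); have := y_max (2^-1 *: (x + y)); lra.
Qed.

Section StablePoint.
Variables (R : realType) (n : nat) (Sigma : 'M[R]_n) (gamma : 'rV[R]_n).
Hypotheses (Sigma_spd : sym_posdef Sigma) (gamma_gt0 : forall i, 0 < gamma 0 i).

Definition sqnorm (u : 'cV[R]_n) : R := (u^T *m Sigma *m u) 0 0.

Definition risk (W : 'M[R]_n) : R := \sum_i gamma 0 i * sqnorm (col i W).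

Lemma sqnorm_ge0 u : 0 <= sqnorm u.
Proof.
have [->|u_neq0] := eqVneq u 0; first by rewrite /sqnorm mulmx0 mxE.
by apply/ltW; case: Sigma_spd => _ /(_ u u_neq0).
Qed.

Lemma sqnorm_eq0 u : (sqnorm u == 0) = (u == 0).
Proof.
apply/idP/idP => [|/eqP->]; last by rewrite /sqnorm mulmx0 mxE.
apply: contraLR => u_neq0; case: Sigma_spd => _ /(_ u u_neq0).
by rewrite lt0r => /andP[].
Qed.

Lemma risk_ge0 W : 0 <= risk W.
Proof. by apply: sumr_ge0 => i _; rewrite mulr_ge0 ?sqnorm_ge0 ?ltW. Qed.

Lemma risk_eq0 W : (risk W == 0) = (W == 0).
Proof.
apply/idP/idP => [|/eqP->]; last first.
  by rewrite /risk big1 // => i _; rewrite /sqnorm col0 mulmx0 mxE mulr0.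
have terms_ge0 i : true -> 0 <= gamma 0 i * sqnorm (col i W).
  by rewrite mulr_ge0 ?sqnorm_ge0 ?ltW.
move=> /eqP/(psumr_eq0P terms_ge0) terms0; apply/eqP/matrixP => a b; rewrite mxE.
have /eqP := terms0 b isT.
rewrite mulf_eq0 gt_eqF //= sqnorm_eq0 => /eqP/colP/(_ a).
by rewrite !mxE.
Qed.

Lemma mxtrace_risk W : \tr (W^T *m Sigma *m W *m diag_mx gamma) = risk W.
Proof.
apply: eq_bigr => i _; rewrite mul_mx_diag mxE mulrC; congr (_ * _).
rewrite /sqnorm !mxE; apply: eq_bigr => j _; rewrite !mxE; congr (_ * _).
by apply: eq_bigr => l _; rewrite !mxE.
Qed.

Lemma stable_point_trace M' W P : is_stable_point Sigma gamma M' (W, P) ->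
  \tr (W *m M') = 2 * risk W.
Proof.
move=> [/= W_sym [/= P_skew stable_eq]].
have -> : M' = 2%:R *: (Sigma *m W *m diag_mx gamma) + P by rewrite -stable_eq subrK.
rewrite mulmxDr mxtraceD (mxtrace_sym_skew W_sym P_skew) addr0 -scalemxAr mxtraceZ.
by rewrite -mxtrace_risk W_sym !mulmxA.
Qed.

Lemma is_stable_point_lincomb a b M1 M2 X Y :
  is_stable_point Sigma gamma M1 X -> is_stable_point Sigma gamma M2 Y ->
  is_stable_point Sigma gamma (a *: M1 + b *: M2) (a *: X + b *: Y).
Proof.
case: X Y => [W1 P1] [W2 P2] [/= W1_sym [/= P1_skew eq1]] [/= W2_sym [/= P2_skew eq2]].
split; first by rewrite /= linearD !linearZ /= W1_sym W2_sym.
split; first by rewrite /= linearD !linearZ /= P1_skew P2_skew !scalerN opprD.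
rewrite /= opprD addrACA -!scalerBr eq1 eq2 mulmxDr mulmxDl.
by rewrite -!scalemxAr -!scalemxAl scalerDr !scalerA (mulrC a) (mulrC b).
Qed.

Lemma is_stable_point0 X : is_stable_point Sigma gamma 0 X -> X = 0.
Proof.
case: X => W P stable0; have := stable_point_trace stable0.
rewrite mulmx0 mxtrace0 => /esym/eqP; rewrite mulf_eq0 pnatr_eq0 /= risk_eq0.
move=> /eqP W0; move: stable0 => [_ [_ /=]].
by rewrite W0 mulmx0 mul0mx scaler0 sub0r => /eqP; rewrite oppr_eq0 => /eqP->.
Qed.

Lemma is_stable_point_unique M' X Y : is_stable_point Sigma gamma M' X ->
  is_stable_point Sigma gamma M' Y -> X = Y.
Proof.
move=> stableX stableY; apply/eqP; rewrite -subr_eq0; apply/eqP/is_stable_point0.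
have := is_stable_point_lincomb 1 (-1) stableX stableY.
by rewrite !scale1r !scaleN1r subrr.
Qed.

(* The symmetric part of the stable-point equation [M' - P = 2 Sigma W Gamma]. *)
Definition sylvester W := Sigma *m W *m diag_mx gamma + diag_mx gamma *m W *m Sigma.

Lemma sylvester_is_linear : linear sylvester.
Proof.
move=> a A B; rewrite /sylvester !(mulmxDr, mulmxDl) -!(scalemxAl, scalemxAr).
by rewrite scalerDr addrACA.
Qed.

HB.instance Definition _ := GRing.isLinear.Build R _ _ _ sylvester sylvester_is_linear.

Lemma sylvester_tr W : sylvester W^T = (sylvester W)^T.
Proof.
case: Sigma_spd => Sigma_sym _.
by rewrite /sylvester linearD /= !trmx_mul !tr_diag_mx Sigma_sym addrC !mulmxA.
Qed.

Lemma sylvester_eq0 W : sylvester W = 0 -> W = 0.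
Proof.
move=> sylW0; apply/eqP; rewrite -risk_eq0.
have : \tr (W^T *m sylvester W) = risk W + risk W^T.
  rewrite /sylvester mulmxDr mxtraceD !mulmxA mxtrace_risk; congr (_ + _).
  by rewrite -mxtrace_risk trmxK mxtrace_mulC !mulmxA mxtrace_mulC !mulmxA.
rewrite sylW0 mulmx0 mxtrace0 => /esym/eqP.
by rewrite paddr_eq0 ?risk_ge0 // => /andP[].
Qed.

Lemma sylvester_surj B : exists W, sylvester W = B.
Proof.
have K_unit : lin_mx sylvester \in unitmx.
  rewrite -row_free_unit; apply: inj_row_free => v v0.
  have : sylvester (vec_mx v) = 0 by rewrite -mx_rV_lin v0 linear0.
  by move/sylvester_eq0/(congr1 mxvec); rewrite vec_mxK linear0.
exists (vec_mx (mxvec B *m invmx (lin_mx sylvester))).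
by rewrite -mx_vec_lin vec_mxK mulmxKV // mxvecK.
Qed.

Lemma stable_point_exists M' : exists X, is_stable_point Sigma gamma M' X.
Proof.
case: Sigma_spd => Sigma_sym _.
have [W sylW] := sylvester_surj (2^-1 *: (M' + M'^T)).
have W_sym : W^T = W.
  apply/eqP; rewrite -subr_eq0; apply/eqP/sylvester_eq0.
  by rewrite raddfB /= sylvester_tr sylW linearZ /= linearD /= trmxK (addrC M'^T) subrr.
exists (W, M' - 2%:R *: (Sigma *m W *m diag_mx gamma)).
split=> //; split; last by rewrite /= opprB addrC subrK.
have : 2%:R *: (Sigma *m W *m diag_mx gamma) + 2%:R *: (diag_mx gamma *m W *m Sigma)
    = M' + M'^T.
  by rewrite -scalerDr -[_ + _]/(sylvester W) sylW scalerA mulfV ?pnatr_eq0 // scale1r.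
rewrite /= linearB /= linearZ /= !trmx_mul tr_diag_mx Sigma_sym W_sym mulmxA.
move: (Sigma *m W *m _) (diag_mx gamma *m W *m Sigma) => X Y /matrixP XY.
by apply/matrixP => i j; have := XY i j; rewrite !mxE; lra.
Qed.

Lemma stable_pointP M' : is_stable_point Sigma gamma M' (stable_point Sigma gamma M').
Proof. exact: xgetPex (stable_point_exists M'). Qed.

Lemma stable_point_eq M' X : is_stable_point Sigma gamma M' X ->
  stable_point Sigma gamma M' = X.
Proof. exact: is_stable_point_unique (stable_pointP M'). Qed.

Lemma stable_point_linear : linear (stable_point Sigma gamma).
Proof.
move=> a A B; apply: stable_point_eq.
have := is_stable_point_lincomb a 1 (stable_pointP A) (stable_pointP B).
by rewrite !scale1r.
Qed.

Definition curvature k (X : 'M[R]_n * 'M[R]_n) : R :=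
  ((col k X.1)^T *m col k X.2) 0 0 + gamma 0 k * sqnorm (col k X.1).

Lemma utility_midpoint M k X Y :
  utility Sigma gamma M k (2^-1 *: (X + Y)) =
  2^-1 * (utility Sigma gamma M k X + utility Sigma gamma M k Y)
  + 4^-1 * curvature k (X - Y).
Proof.
pose l (X : 'M[R]_n * 'M[R]_n) := \tr ((col k X.1)^T *m col k M).
pose B (X Y : 'M[R]_n * 'M[R]_n) := \tr ((col k X.1)^T *m col k Y.2)
  + gamma 0 k * \tr ((col k X.1)^T *m Sigma *m col k Y.1).
have utilityE Z : utility Sigma gamma M k Z = l Z - B Z Z.
  by rewrite /utility mulmxBr -!trace_mx11 raddfB /= opprD addrA.
rewrite !utilityE /curvature /sqnorm -!trace_mx11.
apply: quadratic_midpoint => [a U V|Z a U V|Z a U V]; rewrite /l /B /=.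
all: rewrite !linearP /= ?mulmxDl -?scalemxAl ?mxtraceD ?mxtraceZ; ring.
Qed.

Lemma curvature_stable_gt0 k (v : 'cV[R]_n) : v != 0 ->
  0 < curvature k (stable_point Sigma gamma (v *m delta_mx 0 k)).
Proof.
move=> v_neq0; have := stable_pointP (v *m delta_mx 0 k).
case: stable_point => W P stableWP; rewrite /curvature /=.
have trWD := stable_point_trace stableWP.
move: stableWP => [/= W_sym [/= P_skew stable_eq]].
have W_neq0 : W != 0.
  apply: contra_neq v_neq0 => W0; apply: (@skew_mul_delta_eq0 _ _ v k).
  by move: stable_eq; rewrite W0 mulmx0 mul0mx scaler0 => /subr0_eq ->.
have colP_eq : col k P = v - (2 * gamma 0 k) *: (Sigma *m col k W).
  move/(congr1 (col k)): stable_eq.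
  rewrite linearB linearZ /= col_mul_delta col_mul_diag col_mul scalerA => <-.
  by rewrite opprB addrC subrK.
have wv : \tr ((col k W)^T *m v) = 2 * risk W.
  by rewrite trace_mx11 -mxtrace_sym_mul_delta.
have risk_gt0 : 0 < risk W by rewrite lt0r risk_eq0 W_neq0 risk_ge0.
have rest_ge0 : 0 <= \sum_(i | i != k) gamma 0 i * sqnorm (col i W).
  by apply: sumr_ge0 => i _; rewrite mulr_ge0 ?sqnorm_ge0 ?ltW.
have riskE : risk W =
    gamma 0 k * sqnorm (col k W) + \sum_(i | i != k) gamma 0 i * sqnorm (col i W).
  by rewrite /risk (bigD1 k).
rewrite colP_eq mulmxBr -scalemxAr mulmxA -trace_mx11 raddfB /=.
rewrite (mxtraceZ (2 * gamma 0 k)) wv.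
rewrite trace_mx11 -/(sqnorm _).
nra.
Qed.

Lemma utility_deviate_midpoint M (d : 'I_n -> 'cV[R]_n) k x y :
  let u z := utility Sigma gamma M k (stable_point Sigma gamma (deviate M d k z)) in
  u (2^-1 *: (x + y)) = 2^-1 * (u x + u y)
    + 4^-1 * curvature k (stable_point Sigma gamma ((x - y) *m delta_mx 0 k)).
Proof.
pose sp : {linear 'M[R]_n -> ('M[R]_n * 'M[R]_n)%type} :=
  HB.pack (stable_point Sigma gamma) (GRing.isLinear.Build _ _ _ _ _ stable_point_linear).
have dev_mid : deviate M d k (2^-1 *: (x + y)) =
    2^-1 *: (deviate M d k x + deviate M d k y).
  by apply/matrixP => a b; rewrite !mxE; case: (b == k); field.
have dev_diff : (x - y) *m delta_mx 0 k = deviate M d k x - deviate M d k y.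
  apply/matrixP => a b; rewrite !mxE big_ord1 !mxE eq_sym.
  by case: (b == k); rewrite /= ?mulr1 ?mulr0; ring.
rewrite /= dev_mid dev_diff -[stable_point Sigma gamma]/(sp : _ -> _).
by rewrite linearZ linearD linearB utility_midpoint.
Qed.
End StablePoint.

Section LfunClosure.
Context {d : measure_display} {Omega : measurableType d} {R : realType}.
Variable P : probability Omega R.
Local Open Scope ereal_scope.

Lemma sqr_integrable_Lfun2 (f : Omega -> R) : measurable_fun setT f ->
  P.-integrable setT (fun w => (f w ^+ 2)%:E) -> f \in Lfun P 2%:E.
Proof.
move=> mf /integrableP[_ f2_fin]; rewrite inE; apply/andP; split; rewrite inE //=.
rewrite /finite_norm unlock /Lnorm poweR_lty // (le_lt_trans _ f2_fin) //.
have -> : (fun w => `|(EFin \o f) w| `^ 2) = (fun w => (f w ^+ 2)%:E).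
  by apply/funext => w; rewrite /= powR_mulrn // real_normK ?num_real.
rewrite le_eqVlt; apply/orP; left; apply/eqP; apply: eq_integral => w _.
by rewrite gee0_abs // lee_fin sqr_ge0.
Qed.

Lemma Lfun_sum p (I : Type) (r : seq I) (F : I -> Omega -> R) : 1 <= p ->
  (forall i, F i \in Lfun P p) -> (fun w => \sum_(i <- r) F i w)%R \in Lfun P p.
Proof. by move=> p1 F_L; rewrite -fct_sumE rpred_sum. Qed.

Lemma Lfun_add p (f g : Omega -> R) : 1 <= p ->
  f \in Lfun P p -> g \in Lfun P p -> (fun w => f w + g w)%R \in Lfun P p.
Proof. by move=> p1 fL gL; apply: rpredD. Qed.

Lemma Lfun_sub p (f g : Omega -> R) : 1 <= p ->
  f \in Lfun P p -> g \in Lfun P p -> (fun w => f w - g w)%R \in Lfun P p.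
Proof. by move=> p1 fL gL; apply: rpredB. Qed.

Lemma Lfun2_mul (f g : Omega -> R) :
  f \in Lfun P 2%:E -> g \in Lfun P 2%:E -> (fun w => f w * g w)%R \in Lfun P 1.
Proof. exact: Lfun2_mul_Lfun1. Qed.

Lemma Lfun2_linear_entry m1 n1 m2 n2 (f : 'M[R]_(m1, n1) -> 'M[R]_(m2, n2))
    (D : Omega -> 'M[R]_(m1, n1)) : linear f ->
  (forall a b, (fun w => D w a b) \in Lfun P 2%:E) ->
  forall i j, (fun w => f (D w) i j) \in Lfun P 2%:E.
Proof.
move=> f_lin D_L2 i j.
have -> : (fun w => f (D w) i j) =
    (fun w => \sum_a \sum_b D w a b * f (delta_mx a b) i j)%R.
  apply/funext => w; rewrite linear_mx_sum_delta // summxE.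
  by apply: eq_bigr => a _; rewrite summxE; apply: eq_bigr => b _; rewrite mxE.
apply: Lfun_sum; rewrite ?lee1n // => a; apply: Lfun_sum; rewrite ?lee1n // => b.
have two_ge1 : (1 <= 2 :> R)%R by rewrite ler1n.
exact: (Lfun_scale _ two_ge1 (D_L2 a b)).
Qed.
End LfunClosure.

Lemma utility_entries (R : realType) n (Sigma : 'M[R]_n) gamma M k X :
  utility Sigma gamma M k X = \sum_i X.1 i k * (M i k - X.2 i k)
    - \sum_j (\sum_i X.1 i k * (gamma 0 k * Sigma i j)) * X.1 j k.
Proof.
rewrite /utility !mxE mulr_sumr; congr (_ - _); apply: eq_bigr => j _.
  by rewrite !mxE.
rewrite !mxE mulrA mulr_sumr; congr (_ * _); apply: eq_bigr => i _.
by rewrite !mxE mulrCA.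
Qed.

Section StablePointIntegrability.
Context {d : measure_display} {Omega : measurableType d} {R : realType} {n : nat}.
Variables (P : probability Omega R) (Sigma : 'M[R]_n) (gamma : 'rV[R]_n).
Hypotheses (Sigma_spd : sym_posdef Sigma) (gamma_gt0 : forall i, 0 < gamma 0 i).

Lemma stable_point_Lfun2 (D : Omega -> 'M[R]_n) :
  (forall a b, (fun w => D w a b) \in Lfun P 2%:E) ->
  (forall i j, (fun w => (stable_point Sigma gamma (D w)).1 i j) \in Lfun P 2%:E) /\
  (forall i j, (fun w => (stable_point Sigma gamma (D w)).2 i j) \in Lfun P 2%:E).
Proof.
have sp_lin := stable_point_linear Sigma_spd gamma_gt0.
move=> D_L2; split.
  apply: (Lfun2_linear_entry (f := fun A => (stable_point Sigma gamma A).1)) D_L2.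
  by move=> a A B; rewrite sp_lin.
apply: (Lfun2_linear_entry (f := fun A => (stable_point Sigma gamma A).2)) D_L2.
by move=> a A B; rewrite sp_lin.
Qed.

Lemma utility_stable_Lfun1 M k (D : Omega -> 'M[R]_n) :
  (forall a b, (fun w => D w a b) \in Lfun P 2%:E) ->
  (fun w => utility Sigma gamma M k (stable_point Sigma gamma (D w))) \in Lfun P 1.
Proof.
move=> /stable_point_Lfun2[W_L2 P_L2].
under eq_fun => w do rewrite utility_entries.
apply: Lfun_sub => //; apply: Lfun_sum => // i.
- apply: Lfun2_mul => //; apply: Lfun_sub; rewrite ?lee1n //.
  exact: Lfun_cst.
- apply: Lfun2_mul => //; apply: Lfun_sum; rewrite ?lee1n // => j.
  by apply: Lfun_scale => //; rewrite ler1n.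
Qed.

End StablePointIntegrability.

Lemma ae_cst_of_subsingleton {d : measure_display} {T : measurableType d} {R : realType}
    (P : probability T R) (U : Type) (Q : U -> Prop) (X : T -> U) :
  (forall x y, Q x -> Q y -> x = y) -> {ae P, forall w, Q (X w)} ->
  exists c, {ae P, forall w, X w = c}.
Proof.
move=> Q_uniq [N [mN PN0 notQ_N]].
have [w0 Qw0] : exists w, Q (X w).
  apply: contrapT => noQ; have : (P setT <= P N)%E.
    apply: le_measure; rewrite ?inE // => w _.
    by apply: notQ_N => Qw; apply: noQ; exists w.
  by rewrite probability_setT PN0 lee_fin ler10.
exists (X w0), N; split => // w /= neq; apply: notQ_N => Qw; apply: neq.
exact: Q_uniq Qw Qw0.
Qed.

Section Equilibrium.
Context {d : measure_display} {Omega : measurableType d} {R : realType} {n : nat}.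
Variables (P : probability Omega R) (Sigma : 'M[R]_n) (gamma : 'rV[R]_n).
Variables (M : 'M[R]_n) (delta : 'I_n -> Omega -> 'cV[R]_n) (k : 'I_n).
Hypotheses (Sigma_spd : sym_posdef Sigma) (gamma_gt0 : forall i, 0 < gamma 0 i).
Hypothesis delta_L2 : forall j a, (fun w => delta j w a 0) \in Lfun P 2%:E.

Let u z w :=
  utility Sigma gamma M k (stable_point Sigma gamma (deviate M (delta^~ w) k z)).
Let E z := exp_utility P Sigma gamma M delta k z.

Lemma utility_deviate_Lfun1 z : u z \in Lfun P 1.
Proof.
apply: utility_stable_Lfun1 => // a b; rewrite /deviate.
under eq_fun => w do rewrite !mxE.
apply: Lfun_add; rewrite ?lee1n ?Lfun_cst //.
by case: (b == k); rewrite ?Lfun_cst.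
Qed.

Lemma exp_utilityE z : E z = ('E_P[u z])%E.
Proof. by rewrite unlock. Qed.

Lemma exp_utility_fin_num z : E z \is a fin_num.
Proof. by rewrite exp_utilityE expectation_fin_num ?utility_deviate_Lfun1. Qed.

Lemma exp_utility_midpoint x y :
  fine (E (2^-1 *: (x + y))) = 2^-1 * (fine (E x) + fine (E y))
    + 4^-1 * curvature Sigma gamma k (stable_point Sigma gamma ((x - y) *m delta_mx 0 k)).
Proof.
set c := curvature _ _ _ _; rewrite !exp_utilityE.
have -> : u (2^-1 *: (x + y)) = (2^-1 \o* (u x \+ u y)) \+ cst (4^-1 * c).
  by apply/funext => w; rewrite /u utility_deviate_midpoint //= mulrC.
have uxy_L1 : (u x \+ u y) \in Lfun P 1 by rewrite rpredD ?utility_deviate_Lfun1.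
rewrite expectationD ?Lfun_cst //; last exact: Lfun_scale.
rewrite expectationZl // expectationD ?utility_deviate_Lfun1 // expectation_cst.
rewrite -(fineK (expectation_fin_num (utility_deviate_Lfun1 x))).
by rewrite -(fineK (expectation_fin_num (utility_deviate_Lfun1 y))) -EFinD.
Qed.

Lemma exp_utility_midpoint_gt x y : x != y ->
  2^-1 * (fine (E x) + fine (E y)) < fine (E (2^-1 *: (x + y))).
Proof.
move=> x_neq_y; rewrite [X in _ < X](exp_utility_midpoint x y) ltrDl.
by rewrite mulr_gt0 ?invr_gt0 // curvature_stable_gt0 // subr_eq0.
Qed.

Lemma exp_utility_argmax_unique x y :
  (forall z, (E z <= E x)%E) -> (forall z, (E z <= E y)%E) -> x = y.
Proof.
have fine_max w z : (E z <= E w)%E -> fine (E z) <= fine (E w).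
  exact: fine_le (exp_utility_fin_num z) (exp_utility_fin_num w).
move=> x_max y_max.
have := midpoint_concave_argmax_unique (F := fun z => fine (E z)) exp_utility_midpoint_gt.
apply=> z; [exact: fine_max (x_max z) | exact: fine_max (y_max z)].
Qed.

End Equilibrium.

Local Open Scope classical_set_scope.

Theorem mainTheorem8 (R : realType) (n : nat) (Sigma : 'M[R]_n)
  (gamma : 'rV[R]_n) (M : 'M[R]_n) (S : {set 'I_n})
  (d : measure_display) (Omega : measurableType d) (P : probability Omega R)
  (delta : 'I_n -> Omega -> 'cV[R]_n) :
  sym_posdef Sigma ->
  (forall i, 0 < gamma 0 i) ->
  (* finite first and second moments *)
  (forall k i, k \in S ->
     P.-integrable setT (fun w => (delta k w i 0%R)%:E) /\
     P.-integrable setT (fun w => ((delta k w i 0%R) ^+ 2)%:E)) ->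
  (* non-strategic agents report their true beliefs *)
  (forall k w, k \notin S -> delta k w = 0) ->
  indep_vectors P S delta ->
  (* mixed Nash equilibrium *)
  (forall k, k \in S ->
     {ae P, forall w, forall x : 'cV[R]_n,
        (exp_utility P Sigma gamma M delta k x
         <= exp_utility P Sigma gamma M delta k (delta k w))%E}) ->
  forall k, k \in S ->
    exists c : 'cV[R]_n, {ae P, forall w, delta k w = c}.
Proof.
move=> Sigma_spd gamma_gt0 moments passive _ nash k kS.
have delta_L2 j a : (fun w => delta j w a 0) \in Lfun P 2%:E.
  have [jS|jNS] := boolP (j \in S).
    have [/measurable_int/measurable_realfun.measurable_EFinP delta_meas] :=
      moments j a jS.
    exact: sqr_integrable_Lfun2.
  under eq_fun => w do rewrite passive // mxE.
  exact: Lfun_cst.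
apply: ae_cst_of_subsingleton (nash k kS) => x y.
exact: (exp_utility_argmax_unique Sigma_spd gamma_gt0 delta_L2).
Qed.
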